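(* Let $T_0$ be a closed, symmetric operator with dense domain in a Hilbert space $\mathcal{H}$, and suppose $T_0$ has a self-adjoint extension $T$ (with domain in $\mathcal{H}$) that has a bounded inverse $T^{-1}$ defined on all of $\mathcal{H}$. Let $X := T(T - iI)^{-1} = (I - iT^{-1})^{-1}$. Then $X$ restricts to a bijection from $(\mathrm{Ran}\, T_0)^\perp$ onto $(\mathrm{Ran}(T_0 + iI))^\perp$. In particular, $n := \dim (\mathrm{Ran}\, T_0)^\perp = \dim(\mathrm{Ran}(T_0 + iI))^\perp$, and $T_0$ has equal deficiency indices $(n,n)$.
   Context: The deficiency indices of a closed symmetric operator $T_0$ are $(n_+,n_-)$ with $n_\pm = \dim(\mathrm{Ran}(T_0 \pm iI))^\perp \in \{0,1,2,\dots\}\cup\{+\infty\}$. *)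

(* Unbounded operators are pairs (D, A) of a domain predicate
   and a map, linear on D. *)
From HB Require Import structures.
From mathcomp Require Import all_boot all_order all_algebra.
From mathcomp Require Import reals.
From mathcomp.real_closed Require Import complex.
Import GRing.Theory Num.Theory.
Set Implicit Arguments.
Unset Strict Implicit.
Unset Printing Implicit Defensive.
Local Open Scope ring_scope.

Section Hilbert.
Variables (R : realType) (H : lmodType R[i]).

(* inner product, linear in the first argument, conjugate-linear in the second *)
Definition is_inner (ip : H -> H -> R[i]) : Prop :=
  [/\ (forall (a : R[i]) x y z, ip (a *: x + y) z = a * ip x z + ip y z),
      (forall x y, ip y x = conjc (ip x y)),
      (forall x, 0 <= ip x x) &
      (forall x, ip x x = 0 -> x = 0)].

Definition nrm (ip : H -> H -> R[i]) (x : H) : R := Num.sqrt (complex.Re (ip x x)).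

Definition cvg_to (ip : H -> H -> R[i]) (u : nat -> H) (x : H) : Prop :=
  forall e : R, 0 < e -> exists N, forall n, (N <= n)%N -> nrm ip (u n - x) < e.

Definition cauchy_seq (ip : H -> H -> R[i]) (u : nat -> H) : Prop :=
  forall e : R, 0 < e -> exists N, forall m n, (N <= m)%N -> (N <= n)%N ->
    nrm ip (u m - u n) < e.

Definition is_hilbert (ip : H -> H -> R[i]) : Prop :=
  is_inner ip /\ forall u, cauchy_seq ip u -> exists x, cvg_to ip u x.

Definition is_op (D : H -> Prop) (A : H -> H) : Prop :=
  [/\ D 0,
      (forall x y, D x -> D y -> D (x + y)),
      (forall (a : R[i]) x, D x -> D (a *: x)),
      (forall x y, D x -> D y -> A (x + y) = A x + A y) &
      (forall (a : R[i]) x, D x -> A (a *: x) = a *: A x)].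

Definition dense (ip : H -> H -> R[i]) (D : H -> Prop) : Prop :=
  forall x (e : R), 0 < e -> exists y, D y /\ nrm ip (x - y) < e.

Definition closed_op (ip : H -> H -> R[i]) (D : H -> Prop) (A : H -> H) : Prop :=
  forall (u : nat -> H) x y, (forall n, D (u n)) ->
    cvg_to ip u x -> cvg_to ip (fun n => A (u n)) y -> D x /\ A x = y.

Definition symmetric_op (ip : H -> H -> R[i]) (D : H -> Prop) (A : H -> H) : Prop :=
  forall x y, D x -> D y -> ip (A x) y = ip x (A y).

Definition adj_dom (ip : H -> H -> R[i]) (D : H -> Prop) (A : H -> H) (y : H) : Prop :=
  exists z, forall x, D x -> ip (A x) y = ip x z.

(* self-adjoint: densely defined, Dom(adj A) = Dom(A), and adj A = A on it
   (adj A y is the unique z above, by density; it equals A y iff A is symmetric) *)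
Definition self_adjoint (ip : H -> H -> R[i]) (D : H -> Prop) (A : H -> H) : Prop :=
  [/\ is_op D A, dense ip D,
      (forall y, D y <-> adj_dom ip D A y) &
      symmetric_op ip D A].

Definition extends (D0 : H -> Prop) (A0 : H -> H) (D : H -> Prop) (A : H -> H) : Prop :=
  forall x, D0 x -> D x /\ A x = A0 x.

Definition bounded_inverse (ip : H -> H -> R[i]) (D : H -> Prop) (A : H -> H)
    (Tinv : H -> H) : Prop :=
  [/\ (forall (a : R[i]) x y, Tinv (a *: x + y) = a *: Tinv x + Tinv y),
      (exists M : R, forall x, nrm ip (Tinv x) <= M * nrm ip x),
      (forall x, D (Tinv x) /\ A (Tinv x) = x) &
      (forall x, D x -> Tinv (A x) = x)].

Definition ran_shift (D : H -> Prop) (A : H -> H) (c : R[i]) (z : H) : Prop :=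
  exists x, D x /\ z = A x + c *: x.

Definition ran (D : H -> Prop) (A : H -> H) (z : H) : Prop :=
  exists x, D x /\ z = A x.

Definition perp (ip : H -> H -> R[i]) (S : H -> Prop) (y : H) : Prop :=
  forall x, S x -> ip x y = 0.

Definition has_indep (S : H -> Prop) (k : nat) : Prop :=
  exists v : 'I_k -> H, (forall j, S (v j)) /\
    forall c : 'I_k -> R[i], \sum_(j < k) c j *: v j = 0 -> forall j, c j = 0.

End Hilbert.

Definition iC (R : realType) : R[i] := Complex 0 1.

Inductive extnat := Fin of nat | Infty.

Definition dim_is (R : realType) (H : lmodType R[i]) (S : H -> Prop) (d : extnat) : Prop :=
  match d with
  | Fin n => has_indep S n /\ ~ has_indep S n.+1
  | Infty => forall k, has_indep S k
  end.

Definition deficiency_indices (R : realType) (H : lmodType R[i]) (ip : H -> H -> R[i])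
    (D : H -> Prop) (A : H -> H) (np nm : extnat) : Prop :=
  dim_is (perp ip (ran_shift D A (iC R))) np /\ dim_is (perp ip (ran_shift D A (- iC R))) nm.

From HB Require Import structures.
From mathcomp Require Import all_boot all_order all_algebra.
From mathcomp Require Import reals.
From mathcomp.real_closed Require Import complex.
From mathcomp.algebra_tactics Require Import ring lra.
From Stdlib Require Import ClassicalEpsilon Classical.
Import Order.TTheory GRing.Theory Num.Theory.
Set Implicit Arguments.
Unset Strict Implicit.
Unset Printing Implicit Defensive.
Local Open Scope ring_scope.
Local Open Scope complex_scope.

(* Only the symmetry of T and its bounded inverse S := T^-1 are used. S is
   bounded and symmetric, and I + S^2 is onto: if M bounds S and
   c := 1 / (1 + M^2), the Richardson iteration x |-> x - c (x + S^2 x - w) is a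
   contraction of ratio M^2 c < 1. For s = +-i we have s^2 = -1, so
   (I - s S) (I + s S) = I + S^2 and I - s S is onto; it is injective because
   <S x, x> is real. Since <T0 u, S y> = <T u, S y> = <u, y>, we get
   <T0 u + s u, y> = <T0 u, (I - s S) y>, so I - s S maps (Ran (T0 + s))^perp
   bijectively onto (Ran T0)^perp, and X is its inverse for s = i. Linear
   bijections preserve dimension, hence n+ = n- = dim (Ran T0)^perp. *)

Lemma ler_sqr_le (R : realDomainType) (a b : R) : 0 <= b -> a ^+ 2 <= b ^+ 2 -> a <= b.
Proof.
move=> b0 ab; apply: le_trans (ler_norm a) _.
by rewrite -(ler_pXn2r (n := 2)) ?nnegrE ?normr_ge0 // real_normK ?num_real.
Qed.

Lemma bernoulli_exprn (R : realDomainType) (q : R) (n : nat) :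
  0 <= q -> q <= 1 -> q ^+ n * (1 + n%:R * (1 - q)) <= 1.
Proof.
move=> q0 q1; elim: n => [|n IH]; first by rewrite expr0 mul0r addr0 mul1r.
have loss : 0 <= q ^+ n * (n.+1%:R * (1 - q) ^+ 2).
  by rewrite mulr_ge0 ?exprn_ge0 // mulr_ge0 ?sqr_ge0.
have -> : q ^+ n.+1 * (1 + n.+1%:R * (1 - q)) =
    q ^+ n * (1 + n%:R * (1 - q)) - q ^+ n * (n.+1%:R * (1 - q) ^+ 2).
  by rewrite exprS mulrSr; ring.
lra.
Qed.

Lemma exists_exprn_lt (R : archiRealFieldType) (q e : R) :
  0 <= q -> q < 1 -> 0 < e -> exists n, q ^+ n < e.
Proof.
move=> q0 q1 e0; have d0 : 0 < 1 - q by rewrite subr_gt0.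
have ed0 : 0 < e * (1 - q) by rewrite mulr_gt0.
have [n n_big] : exists n : nat, (e * (1 - q))^-1 < n%:R.
  by exists (Num.Def.archi_bound (e * (1 - q))^-1); rewrite archi_boundP // invr_ge0 ltW.
exists n; have := bernoulli_exprn n q0 (ltW q1).
have qn0 : 0 <= q ^+ n by rewrite exprn_ge0.
rewrite -(ltr_pM2l ed0) mulfV ?gt_eqF // in n_big.
nra.
Qed.

Definition linear_map (K : pzRingType) (V W : lmodType K) (f : V -> W) : Prop :=
  forall (a : K) x y, f (a *: x + y) = a *: f x + f y.

Section LinearMaps.
Variables (K : pzRingType) (V W : lmodType K) (f : V -> W).
Hypothesis f_lin : linear_map f.

Lemma lin0 : f 0 = 0.
Proof.
have := f_lin 1 0 0; rewrite !scale1r addr0 => f00.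
by apply: (@addrI _ (f 0)); rewrite addr0 -f00.
Qed.

Lemma linD x y : f (x + y) = f x + f y.
Proof. by rewrite -[x in LHS]scale1r f_lin scale1r. Qed.

Lemma linZ a x : f (a *: x) = a *: f x.
Proof. by rewrite -[a *: x]addr0 f_lin lin0 addr0. Qed.

Lemma linB x y : f (x - y) = f x - f y.
Proof. by rewrite linD -scaleN1r linZ scaleN1r. Qed.

Lemma linear_bij_inverse :
  (forall x, f x = 0 -> x = 0) -> (forall y, exists x, f x = y) ->
  exists g : W -> V, [/\ linear_map g, cancel f g & cancel g f].
Proof.
move=> f_ker f_onto.
have f_inj : injective f.
  by move=> x y fxy; apply/subr0_eq/f_ker; rewrite linB fxy subrr.
pose g y := proj1_sig (constructive_indefinite_description _ (f_onto y)).
have gK : cancel g f := fun y => proj2_sig (constructive_indefinite_description _ (f_onto y)).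
exists g; split=> [a x y | x |] //; apply: f_inj; by rewrite ?f_lin !gK.
Qed.

End LinearMaps.

Section InnerProduct.
Variables (R : realType) (H : lmodType R[i]) (ip : H -> H -> R[i]).
Hypothesis ip_inner : is_inner ip.

Lemma ipDl x y z : ip (x + y) z = ip x z + ip y z.
Proof. by case: ip_inner => ipZDl _ _ _; rewrite -[x in LHS]scale1r ipZDl mul1r. Qed.

Lemma ip0l z : ip 0 z = 0.
Proof. by apply: (@addrI _ (ip 0 z)); rewrite -ipDl !addr0. Qed.

Lemma ipZl a x z : ip (a *: x) z = a * ip x z.
Proof. by case: ip_inner => ipZDl _ _ _; rewrite -[a *: x]addr0 ipZDl ip0l addr0. Qed.

Lemma ipNl x z : ip (- x) z = - ip x z.
Proof. by rewrite -scaleN1r ipZl mulN1r. Qed.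

Lemma ipC x y : ip y x = conjc (ip x y).
Proof. by case: ip_inner. Qed.

Lemma ipDr x y z : ip z (x + y) = ip z x + ip z y.
Proof. by rewrite (ipC (x + y)) (ipC x z) (ipC y z) ipDl rmorphD. Qed.

Lemma ipZr a x z : ip z (a *: x) = conjc a * ip z x.
Proof. by rewrite (ipC (a *: x)) (ipC x z) ipZl rmorphM. Qed.

Lemma ipNr x z : ip z (- x) = - ip z x.
Proof. by rewrite (ipC (- x)) (ipC x z) ipNl rmorphN. Qed.

Lemma ipBr x y z : ip z (x - y) = ip z x - ip z y.
Proof. by rewrite ipDr ipNr. Qed.

Lemma ip_self_ge0 x : 0 <= ip x x.
Proof. by case: ip_inner. Qed.

Lemma sqr_nrm x : nrm ip x ^+ 2 = complex.Re (ip x x).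
Proof. by rewrite sqr_sqrtr //; move: (ip_self_ge0 x); rewrite lecE => /andP[]. Qed.

Lemma ip_self x : ip x x = (nrm ip x ^+ 2)%:C.
Proof.
rewrite sqr_nrm; move: (ip_self_ge0 x); rewrite lecE.
by case: (ip x x) => a b /= /andP[/eqP ->].
Qed.

Lemma nrm_ge0 x : 0 <= nrm ip x.
Proof. exact: sqrtr_ge0. Qed.

Lemma nrm0 : nrm ip 0 = 0.
Proof. by rewrite /nrm ip0l sqrtr0. Qed.

Lemma nrm_eq0 x : nrm ip x = 0 -> x = 0.
Proof. by move=> x0; case: ip_inner => _ _ _; apply; rewrite ip_self x0 expr0n. Qed.

Lemma nrmN x : nrm ip (- x) = nrm ip x.
Proof. by rewrite /nrm ipNl ipNr opprK. Qed.

Lemma nrm_distC x y : nrm ip (x - y) = nrm ip (y - x).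
Proof. by rewrite -nrmN opprB. Qed.

Lemma sqr_nrmD x y :
  nrm ip (x + y) ^+ 2 = nrm ip x ^+ 2 + 2 * complex.Re (ip x y) + nrm ip y ^+ 2.
Proof.
rewrite sqr_nrm ipDl !ipDr (ipC x y) !ip_self.
by case: (ip x y) => u v /=; ring.
Qed.

Lemma sqr_nrm_combR (a b : R) x y :
  nrm ip (a%:C *: x + b%:C *: y) ^+ 2 =
  a ^+ 2 * nrm ip x ^+ 2 + 2 * a * b * complex.Re (ip x y) + b ^+ 2 * nrm ip y ^+ 2.
Proof.
rewrite sqr_nrm ipDl !ipZl !ipDr !ipZr (ipC x y) !ip_self.
by case: (ip x y) => u v /=; simpc; ring.
Qed.

(* Cauchy-Schwarz, from ||t x - y||^2 >= 0 at t = Re <x, y> / ||x||^2 *)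
Lemma Re_ip_le_nrm x y : complex.Re (ip x y) <= nrm ip x * nrm ip y.
Proof.
have [x0 | xn0] := eqVneq (nrm ip x) 0.
  by rewrite (nrm_eq0 x0) ip0l nrm0 mul0r.
have X0 : 0 < nrm ip x ^+ 2 by rewrite exprn_gt0 // lt_def xn0 nrm_ge0.
pose t := complex.Re (ip x y) / nrm ip x ^+ 2.
have tX : t * nrm ip x ^+ 2 = complex.Re (ip x y) by rewrite mulfVK ?gt_eqF.
have := sqr_ge0 (nrm ip (t%:C *: x + (-1)%:C *: y)).
rewrite sqr_nrm_combR -tX => disc.
by apply: ler_sqr_le; rewrite ?mulr_ge0 ?nrm_ge0 // exprMn; nra.
Qed.

Lemma ler_nrmD x y : nrm ip (x + y) <= nrm ip x + nrm ip y.
Proof.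
apply: ler_sqr_le; first by rewrite addr_ge0 ?nrm_ge0.
by rewrite sqr_nrmD sqrrD; have := Re_ip_le_nrm x y; lra.
Qed.

End InnerProduct.

Section Contraction.
Variables (R : realType) (H : lmodType R[i]) (ip : H -> H -> R[i]).
Hypothesis ip_hilbert : is_hilbert ip.
Let ip_inner : is_inner ip := proj1 ip_hilbert.
Variables (F : H -> H) (q : R).
Hypotheses (q_ge0 : 0 <= q) (q_lt1 : q < 1).
Hypothesis F_contract : forall u v, nrm ip (F u - F v) <= q * nrm ip (u - v).

Lemma nrm_iter_contract n u v :
  nrm ip (iter n F u - iter n F v) <= q ^+ n * nrm ip (u - v).
Proof.
elim: n => [|n IH] /=; first by rewrite expr0 mul1r.
by apply: le_trans (F_contract _ _) _; rewrite exprS -mulrA ler_wpM2l.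
Qed.

Lemma cauchy_iter_contract x0 : cauchy_seq ip (fun n => iter n F x0).
Proof.
pose K := nrm ip (F x0 - x0) / (1 - q).
have K0 : 0 <= K by rewrite divr_ge0 ?nrm_ge0 // subr_ge0 ltW.
have orbit_bounded j : nrm ip (iter j F x0 - x0) <= K.
  elim: j => [|j IH] /=; first by rewrite subrr nrm0.
  rewrite -(subrK (F x0) (F _)) -addrA.
  apply: le_trans (ler_nrmD ip_inner _ _) _.
  have := F_contract (iter j F x0) x0.
  have : q * nrm ip (iter j F x0 - x0) <= q * K by rewrite ler_wpM2l.
  have : q * K + nrm ip (F x0 - x0) = K.
    by rewrite /K; field; rewrite subr_eq0 gt_eqF.
  lra.
move=> e e0.
have [N qN] := exists_exprn_lt q_ge0 q_lt1 (divr_gt0 e0 (ltr_wpDl K0 ltr01)).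
rewrite ltr_pdivlMr ?ltr_wpDl // in qN.
exists N => m n Nm Nn.
wlog nm : m n Nm Nn / (n <= m)%N.
  move=> gen; case: (leqP n m) => [|/ltnW] nm; first exact: gen.
  by rewrite nrm_distC //; apply: gen.
rewrite -(subnKC nm) iterD.
apply: le_lt_trans (nrm_iter_contract _ _ _) _.
have qnN : q ^+ n <= q ^+ N by rewrite ler_wiXn2l // ltW.
apply: le_lt_trans (ler_pM (exprn_ge0 _ q_ge0) (nrm_ge0 _ _) qnN (orbit_bounded _)) _.
by apply: le_lt_trans qN; rewrite ler_wpM2l ?exprn_ge0 ?lerDl.
Qed.

Lemma contraction_fixpoint : exists x, F x = x.
Proof.
have [x xn_to_x] := proj2 ip_hilbert _ (cauchy_iter_contract 0).
exists x; apply/subr0_eq/(nrm_eq0 ip_inner)/eqP.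
rewrite eq_le nrm_ge0 andbT; apply/ler_addgt0Pr => e e0; rewrite add0r.
have [N xN_near] := xn_to_x (e / 2) (divr_gt0 e0 (ltr0Sn _ 1)).
have d0 := xN_near N (leqnn N); have d1 := xN_near N.+1 (leqnSn N).
rewrite nrm_distC // in d0.
have -> : F x - x = (F x - F (iter N F 0)) + (iter N.+1 F 0 - x) by rewrite addrA subrK.
apply: le_trans (ler_nrmD ip_inner _ _) _.
have := F_contract x (iter N F 0).
have := ler_piMl (nrm_ge0 ip (x - iter N F 0)) (ltW q_lt1).
lra.
Qed.

End Contraction.

Section SymmetricBounded.
Variables (R : realType) (H : lmodType R[i]) (ip : H -> H -> R[i]).
Hypothesis ip_hilbert : is_hilbert ip.
Let ip_inner : is_inner ip := proj1 ip_hilbert.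
Variables (S : H -> H) (M : R).
Hypothesis S_lin : linear_map S.
Hypothesis S_bounded : forall x, nrm ip (S x) <= M * nrm ip x.
Hypothesis S_sym : forall u v, ip (S u) v = ip u (S v).

Let c : R := (1 + M ^+ 2)^-1.
Let q : R := M ^+ 2 * c.

Let M2_gt0 : 0 < 1 + M ^+ 2.
Proof. by have := sqr_ge0 M; lra. Qed.

Let c_gt0 : 0 < c.
Proof. by rewrite invr_gt0. Qed.

Let q_ge0 : 0 <= q.
Proof. by rewrite mulr_ge0 ?sqr_ge0 ?ltW. Qed.

Let qE : q = 1 - c.
Proof. by rewrite /q /c; field; rewrite gt_eqF. Qed.

Lemma sqr_nrm_bounded x : nrm ip (S x) ^+ 2 <= M ^+ 2 * nrm ip x ^+ 2.
Proof.
rewrite -exprMn ler_pXn2r ?nnegrE ?nrm_ge0 //.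
exact: le_trans (nrm_ge0 ip (S x)) (S_bounded x).
Qed.

(* The map is x |-> q x - c S^2 x, whose cross term is -2 q c ||S x||^2 since
   <x, S^2 x> = ||S x||^2, while c^2 ||S^2 x||^2 <= c^2 M^2 ||S x||^2 = q c ||S x||^2. *)
Lemma nrm_richardson_contract x : nrm ip (x - c%:C *: (x + S (S x))) <= q * nrm ip x.
Proof.
have -> : x - c%:C *: (x + S (S x)) = q%:C *: x + (- c)%:C *: S (S x).
  by rewrite qE rmorphB rmorph1 rmorphN scalerBl scale1r scaleNr scalerDr opprD addrA.
apply: ler_sqr_le; first by rewrite mulr_ge0 ?nrm_ge0.
rewrite sqr_nrm_combR // -S_sym ip_self //=.
have := ler_wpM2l (sqr_ge0 c) (sqr_nrm_bounded (S x)).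
have := mulr_ge0 (mulr_ge0 q_ge0 (ltW c_gt0)) (sqr_ge0 (nrm ip (S x))).
rewrite /q; nra.
Qed.

Lemma id_add_sqr_onto w : exists x, x + S (S x) = w.
Proof.
pose B v := v - c%:C *: (v + S (S v)).
pose F v := B v + c%:C *: w.
have F_contract u v : nrm ip (F u - F v) <= q * nrm ip (u - v).
  suff -> : F u - F v = B (u - v) by exact: nrm_richardson_contract.
  rewrite /F opprD addrACA subrr addr0 /B !(linB S_lin).
  by rewrite [in RHS](addrACA u) -opprD scalerBr opprD addrACA -opprD.
have q_lt1 : q < 1 by rewrite qE; have := c_gt0; lra.
have [x Fx] := contraction_fixpoint ip_hilbert q_ge0 q_lt1 F_contract.
have c_neq0 : c%:C != 0 by rewrite eq_complex /= negb_and gt_eqF.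
have : c%:C *: (x + S (S x) - w) = 0.
  apply/oppr_inj/(addrI x).
  by rewrite oppr0 addr0 -scalerN opprB scalerBr addrCA addrC.
by move/eqP; rewrite scaler_eq0 (negbTE c_neq0) subr_eq0 => /eqP; exists x.
Qed.

End SymmetricBounded.

Section Dimension.
Variables (R : realType) (H : lmodType R[i]).

Lemma has_indep_lin_inj (A B : H -> Prop) (f : H -> H) k :
  linear_map f -> (forall x, f x = 0 -> x = 0) -> (forall x, A x -> B (f x)) ->
  has_indep A k -> has_indep B k.
Proof.
move=> f_lin f_ker fAB [v [Av v_free]].
exists (fun j => f (v j)); split=> [j | a sum0]; first exact: fAB.
apply/v_free/f_ker; rewrite (big_morph f (linD f_lin) (lin0 f_lin)).
by under eq_bigr do rewrite (linZ f_lin).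
Qed.

Lemma has_indep0 (A : H -> Prop) : has_indep A 0.
Proof. by exists (fun=> 0); split=> [[]|c _ []]. Qed.

Lemma dim_is_exists (A : H -> Prop) : exists n, dim_is A n.
Proof.
have [all_indep | /not_all_ex_not[k not_indep]] := classic (forall k, has_indep A k).
  by exists Infty.
elim: k not_indep => [|k IH] not_indep; first by case: not_indep; exact: has_indep0.
have [indep_k | ] := classic (has_indep A k); first by exists (Fin k).
exact: IH.
Qed.

Lemma dim_is_transfer (A B : H -> Prop) n :
  (forall k, has_indep A k <-> has_indep B k) -> dim_is A n -> dim_is B n.
Proof.
move=> AB; case: n => [n [indep_n not_indep]|indep] /=; last by move=> k; apply/AB.
by split; [apply/AB | move/AB].
Qed.

End Dimension.

Definition one_sub (R : realType) (H : lmodType R[i]) (s : R[i]) (S : H -> H) (x : H) : H :=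
  x - s *: S x.

Section OneSub.
Variables (R : realType) (H : lmodType R[i]) (ip : H -> H -> R[i]).
Hypothesis ip_inner : is_inner ip.
Variables (S : H -> H) (s : R[i]).
Hypothesis S_lin : linear_map S.
Hypothesis S_sym : forall u v, ip (S u) v = ip u (S v).
Hypotheses (s_sqr : s * s = -1) (s_conj : s^* = - s).

Lemma one_sub_lin : linear_map (one_sub s S).
Proof.
move=> a x y; rewrite /one_sub S_lin scalerDr scalerA mulrC -scalerA.
by rewrite scalerBr opprD addrACA.
Qed.

(* [<x, x> = s <S x, x>], and also [= -s <S x, x>] because [S] is symmetric and [s] imaginary. *)
Lemma one_sub_eq0 x : one_sub s S x = 0 -> x = 0.
Proof.
move/subr0_eq => x_eq.
have e1 : ip x x = s * ip (S x) x by rewrite {1}x_eq ipZl.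
have e2 : ip x x = - s * ip (S x) x by rewrite {2}x_eq ipZr // s_conj S_sym.
case: ip_inner => _ _ _; apply.
have : (s * ip (S x) x) *+ 2 = 0 by rewrite mulr2n -{1}e1 e2 mulNr addNr.
by move/eqP; rewrite mulrn_eq0 /= e1 => /eqP.
Qed.

Lemma one_sub_onto : (forall w, exists x, x + S (S x) = w) ->
  forall w, exists z, one_sub s S z = w.
Proof.
move=> onto w; have [x <-] := onto w; exists (x + s *: S x).
rewrite /one_sub (linD S_lin) (linZ S_lin) scalerDr scalerA s_sqr scaleN1r.
by rewrite opprD opprK addrA addrK.
Qed.

End OneSub.

Lemma sqr_iC (R : realType) : iC R * iC R = -1.
Proof. by rewrite -expr2 sqr_i. Qed.

Lemma conj_iC (R : realType) : (iC R)^* = - iC R.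
Proof. by rewrite /iC; simpc. Qed.

Section Deficiency.
Variables (R : realType) (H : lmodType R[i]) (ip : H -> H -> R[i]).
Hypothesis ip_hilbert : is_hilbert ip.
Let ip_inner : is_inner ip := proj1 ip_hilbert.
Variables (D0 : H -> Prop) (T0 : H -> H) (D : H -> Prop) (T Tinv : H -> H) (M : R).
Hypotheses (T_sym : symmetric_op ip D T) (T_ext : extends D0 T0 D T).
Hypotheses (Tinv_lin : linear_map Tinv) (Tinv_bounded : forall x, nrm ip (Tinv x) <= M * nrm ip x).
Hypothesis T_Tinv : forall x, D (Tinv x) /\ T (Tinv x) = x.
Variable s : R[i].
Hypotheses (s_sqr : s * s = -1) (s_conj : s^* = - s).

Lemma Tinv_sym u v : ip (Tinv u) v = ip u (Tinv v).
Proof.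
have [Du Tu] := T_Tinv u; have [Dv Tv] := T_Tinv v.
by rewrite -{1}Tv -(T_sym Du Dv) Tu.
Qed.

Lemma ip_shift_one_sub u y :
  D0 u -> ip (T0 u + s *: u) y = ip (T0 u) (one_sub s Tinv y).
Proof.
move=> D0u; have [Du Tu] := T_ext D0u; have [DTy TTy] := T_Tinv y.
have uy : ip (T0 u) (Tinv y) = ip u y by rewrite -Tu (T_sym Du DTy) TTy.
by rewrite (ipDl ip_inner) (ipZl ip_inner) (ipBr ip_inner) (ipZr ip_inner) s_conj uy mulNr opprK.
Qed.

Lemma perp_ran_shift_one_sub y :
  perp ip (ran_shift D0 T0 s) y <-> perp ip (ran D0 T0) (one_sub s Tinv y).
Proof.
split=> y_perp _ [u [D0u ->]].
  by rewrite -ip_shift_one_sub //; apply: y_perp; exists u.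
by rewrite ip_shift_one_sub //; apply: y_perp; exists u.
Qed.

Lemma one_sub_inverse :
  exists X : H -> H, [/\ linear_map X, cancel (one_sub s Tinv) X & cancel X (one_sub s Tinv)].
Proof.
apply: linear_bij_inverse; first exact: one_sub_lin.
  exact: (one_sub_eq0 ip_inner Tinv_sym s_conj).
exact: one_sub_onto Tinv_lin s_sqr (id_add_sqr_onto ip_hilbert Tinv_lin Tinv_bounded Tinv_sym).
Qed.

Lemma has_indep_perp_ran_shift k :
  has_indep (perp ip (ran D0 T0)) k <-> has_indep (perp ip (ran_shift D0 T0 s)) k.
Proof.
have [X [X_lin LX XL]] := one_sub_inverse.
split; apply: has_indep_lin_inj.
- exact: X_lin.
- by move=> x X0; rewrite -[x]XL X0 (lin0 (one_sub_lin s Tinv_lin)).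
- by move=> x x_perp; apply/perp_ran_shift_one_sub; rewrite XL.
- exact: one_sub_lin.
- exact: (one_sub_eq0 ip_inner Tinv_sym s_conj).
- by move=> y /perp_ran_shift_one_sub.
Qed.

End Deficiency.

Unset Implicit Arguments.

Theorem mainTheorem7 (R : realType) (H : lmodType R[i]) (ip : H -> H -> R[i])
    (D0 : H -> Prop) (T0 : H -> H) (D : H -> Prop) (T : H -> H) (Tinv : H -> H) :
  is_hilbert ip ->
  is_op D0 T0 -> dense ip D0 -> closed_op ip D0 T0 -> symmetric_op ip D0 T0 ->
  self_adjoint ip D T -> extends D0 T0 D T -> bounded_inverse ip D T Tinv ->
  exists X : H -> H,
    (* X = (I - i T^{-1})^{-1} *)
    (forall x, X (x - (iC R) *: Tinv x) = x /\ X x - (iC R) *: Tinv (X x) = x) /\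
    (* X maps (Ran T0)^perp bijectively onto (Ran (T0 + iI))^perp *)
    (forall x, perp ip (ran D0 T0) x -> perp ip (ran_shift D0 T0 (iC R)) (X x)) /\
    (forall x y, perp ip (ran D0 T0) x -> perp ip (ran D0 T0) y -> X x = X y -> x = y) /\
    (forall y, perp ip (ran_shift D0 T0 (iC R)) y ->
       exists x, perp ip (ran D0 T0) x /\ X x = y) /\
    (* dimensions and deficiency indices *)
    exists n : extnat,
      dim_is (perp ip (ran D0 T0)) n /\
      dim_is (perp ip (ran_shift D0 T0 (iC R))) n /\
      deficiency_indices ip D0 T0 n n.
Proof.
move=> ip_hilbert _ _ _ _ [_ _ _ T_sym] T_ext [Tinv_lin [M Tinv_bounded] T_Tinv _].
have sqr_NiC : - iC R * - iC R = -1 by rewrite mulrNN sqr_iC.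
have conj_NiC : (- iC R)^* = - - iC R by rewrite opprK /iC; simpc.
have [X [_ LX XL]] :=
  one_sub_inverse ip_hilbert T_sym Tinv_lin Tinv_bounded T_Tinv (sqr_iC R) (conj_iC R).
have perpE := perp_ran_shift_one_sub ip_hilbert T_sym T_ext T_Tinv (conj_iC R).
have indepE := has_indep_perp_ran_shift ip_hilbert T_sym T_ext Tinv_lin Tinv_bounded T_Tinv.
have [n dim_n] := dim_is_exists (perp ip (ran D0 T0)).
have dim_i := dim_is_transfer (indepE _ (sqr_iC R) (conj_iC R)) dim_n.
exists X; do ![split].
- exact: LX.
- exact: XL.
- by move=> x x_perp; apply/perpE; rewrite XL.
- by move=> x y _ _; apply: (can_inj XL).
- by move=> y /perpE y_perp; exists (one_sub (iC R) Tinv y).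
exists n; do ![split] => //.
exact: dim_is_transfer (indepE _ sqr_NiC conj_NiC) dim_n.
Qed.
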